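(* For every formula $\varphi$ of $\mathcal L^{\bigcirc}_\square$: $\varphi$ is derivable in $\mathbf{GLC}$ if and only if $\varphi$ is valid on every finite dynamic $\mathbf{GL}$ frame.
   Context: Fix a non-empty set $\mathsf{PV}$ of propositional variables. The language $\mathcal L^{\bigcirc}_\square$ is given by $\varphi::= p\mid \varphi\wedge\varphi\mid\neg\varphi\mid\square\varphi\mid\bigcirc\varphi$ with $p\in\mathsf{PV}$. Axioms and rules: Taut; K: $\square(\varphi\to\psi)\to(\square\varphi\to\square\psi)$; 4: $\square\varphi\to\square\square\varphi$; L: $\square(\square\varphi\to\varphi)\to\square\varphi$; ${\rm Next}_\neg$: $\neg\bigcirc\varphi\leftrightarrow\bigcirc\neg\varphi$; ${\rm Next}_\wedge$: $\bigcirc(\varphi\wedge\psi)\leftrightarrow\bigcirc\varphi\wedge\bigcirc\psi$; C: $\bigcirc\varphi\wedge\bigcirc\square\varphi\to\square\bigcirc\varphi$; rules modus ponens, ${\rm Nec}_\square$, ${\rm Nec}_\bigcirc$. $\mathbf{GLC}$ is axiomatised by Taut, K, 4, L, ${\rm Next}_\neg$, ${\rm Next}_\wedge$, C and closed under these rules. A dynamic Kripke frame is $\langle W,\sqsubset,f\rangle$ with $W$ non-empty, $\sqsubset$ a binary relation on $W$ and $f\colon W\to W$ weakly monotone: $w\sqsubset v$ implies $f(w)=f(v)$ or $f(w)\sqsubset f(v)$. It is a dynamic $\mathbf{GL}$ frame if $\sqsubset$ is transitive and converse well-founded (for finite $W$: transitive and irreflexive). Truth under a valuation: $w\models\square\varphi$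 iff $v\models\varphi$ for all $v$ with $w\sqsubset v$; $w\models\bigcirc\varphi$ iff $f(w)\models\varphi$; other clauses standard. Valid on a frame means true at all points under all valuations. *)

From mathcomp Require Import all_boot.
Set Implicit Arguments.
Unset Strict Implicit.
Unset Printing Implicit Defensive.

Inductive form (PV : Type) : Type :=
| Var : PV -> form PV
| And : form PV -> form PV -> form PV
| Not : form PV -> form PV
| Box : form PV -> form PV
| Next : form PV -> form PV.

Arguments Var {PV} _.
Arguments And {PV} _ _.
Arguments Not {PV} _.
Arguments Box {PV} _.
Arguments Next {PV} _.

Definition Or {PV} (a b : form PV) := Not (And (Not a) (Not b)).
Definition Imp {PV} (a b : form PV) := Not (And a (Not b)).
Definition Iff {PV} (a b : form PV) := And (Imp a b) (Imp b a).

Fixpoint peval {PV} (v : form PV -> bool) (phi : form PV) : bool :=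
  match phi with
  | And a b => peval v a && peval v b
  | Not a => ~~ peval v a
  | _ => v phi
  end.

(** Taut: all substitution instances of propositional tautologies, i.e.
    formulas true under every boolean assignment to their maximal
    non-boolean (Var / Box / Next) subformulas. *)
Definition tautology {PV} (phi : form PV) : Prop :=
  forall v : form PV -> bool, peval v phi = true.

Inductive GLC {PV : Type} : form PV -> Prop :=
| ax_taut phi : tautology phi -> GLC phi
| ax_K phi psi : GLC (Imp (Box (Imp phi psi)) (Imp (Box phi) (Box psi)))
| ax_4 phi : GLC (Imp (Box phi) (Box (Box phi)))
| ax_L phi : GLC (Imp (Box (Imp (Box phi) phi)) (Box phi))
| ax_Next_not phi : GLC (Iff (Not (Next phi)) (Next (Not phi)))
| ax_Next_and phi psi : GLC (Iff (Next (And phi psi)) (And (Next phi) (Next psi)))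
| ax_C phi : GLC (Imp (And (Next phi) (Next (Box phi))) (Box (Next phi)))
| rule_MP phi psi : GLC (Imp phi psi) -> GLC phi -> GLC psi
| rule_Nec_box phi : GLC phi -> GLC (Box phi)
| rule_Nec_next phi : GLC phi -> GLC (Next phi).

Record finDynFrame := FinDynFrame {
  dW : finType;
  dpt : dW;                      (* W is non-empty *)
  dR : dW -> dW -> Prop;
  df : dW -> dW;
  df_weak_mono : forall w v, dR w v -> df w = df v \/ dR (df w) (df v)
}.

Definition is_dynGL (F : finDynFrame) : Prop :=
  (forall x y z : dW F, dR x y -> dR y z -> dR x z) /\ (forall x : dW F, ~ dR x x).

Fixpoint sat {PV} (F : finDynFrame) (V : PV -> dW F -> Prop)
    (w : dW F) (phi : form PV) : Prop :=
  match phi with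
  | Var p => V p w
  | And a b => sat V w a /\ sat V w b
  | Not a => ~ sat V w a
  | Box a => forall u : dW F, dR w u -> sat V u a
  | Next a => sat V (df w) a
  end.

Definition valid_on {PV} (F : finDynFrame) (phi : form PV) : Prop :=
  forall (V : PV -> dW F -> Prop) (w : dW F), sat V w phi.

From mathcomp Require Import all_boot zify.
From Stdlib Require Import Classical ClassicalEpsilon.
From Stdlib Require List.
Set Implicit Arguments.
Unset Strict Implicit.
Unset Printing Implicit Defensive.

(** Soundness is a routine induction on derivations; Löb's axiom holds
    because a finite transitive irreflexive relation is conversely
    well-founded.

    Completeness is proved contrapositively by a finite canonical model.
    Fix [phi] and let a type be a truth assignment to its subformulas.  A
    point is a chain of types [t0, t1, ...] (a point of type [t0] whose image
    under the dynamic map has type [t1], ...) of length [> next_depth phi],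
    whose characteristic formula [t0 ∧ ○(t1 ∧ ○(...))] is consistent.  The
    dynamic map drops the head of a chain.  ⊏ requires the boxes of the head
    to be inherited and the tails to be equal or again related, which is
    exactly weak monotonicity.  Each head also carries a budget limiting how
    long ⊏ may run without gaining a box; this makes ⊏ irreflexive and the
    model finite.  The heart of the proof is [box_cover]: by axiom C, all
    ⊏-successors of a chain are described by finitely many good successor
    chains; with Löb's axiom this yields witnesses for false boxes
    ([box_witness]), hence the truth lemma, and a consistent [¬phi] then
    lives at the root of a chain of the model. *)

(** Formulas over an arbitrary type [PV] carry no decidable equality, so
    membership in a list of formulas is the propositional [List.In]; these
    lemmas connect it with the boolean [has], [all], [map] and [allpairs]. *)

Lemma In_has T (p : pred T) s x : List.In x s -> p x -> has p s.
Proof. elim: s => //= y s IH [->->//|/IH H /H ->]; by rewrite orbT. Qed.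

Lemma has_In T (p : pred T) s : has p s -> exists2 x, List.In x s & p x.
Proof.
elim: s => //= x s IH /orP[px|/IH[y Hy py]]; first by exists x => //; left.
by exists y => //; right.
Qed.

Lemma all_In T (p : pred T) s x : all p s -> List.In x s -> p x.
Proof. elim: s => //= y s IH /andP[py /IH H] [<-//|/H//]. Qed.

Lemma In_all T (p : pred T) s : (forall x, List.In x s -> p x) -> all p s.
Proof.
elim: s => //= y s IH H; rewrite H ?IH //; [by move=> x Hx; apply: H; right | by left].
Qed.

Lemma In_map T U (f : T -> U) s x : List.In x s -> List.In (f x) (map f s).
Proof. elim: s => //= y s IH [->|/IH]; [by left | by right]. Qed.

Lemma In_map_inv T U (f : T -> U) s y :
  List.In y (map f s) -> exists2 x, List.In x s & y = f x.
Proof.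
elim: s => //= x s IH [<-|/IH[z Hz ->]]; first by exists x => //; left.
by exists z => //; right.
Qed.

Lemma In_cat T (x : T) s t : List.In x (s ++ t) <-> List.In x s \/ List.In x t.
Proof. elim: s => [|y s IH] /=; [tauto | rewrite IH; tauto]. Qed.

Lemma In_allpairs (A B R : Type) (f : A -> B -> R) s t a b :
  List.In a s -> List.In b t -> List.In (f a b) [seq f x y | x <- s, y <- t].
Proof.
elim: s => // x s IH [->|Ha] Hb; rewrite allpairs_cons In_cat.
  by left; apply: In_map.
by right; apply: IH.
Qed.

Lemma In_allpairs_inv (A B R : Type) (f : A -> B -> R) s t z :
  List.In z [seq f x y | x <- s, y <- t] ->
  exists a b, [/\ List.In a s, List.In b t & z = f a b].
Proof.
elim: s => // x s IH; rewrite allpairs_cons In_cat => -[Hz|Hz].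
  by have [y Hy ->] := In_map_inv Hz; exists x, y; split => //; left.
by have [a [b [Ha Hb ->]]] := IH Hz; exists a, b; split => //; right.
Qed.

Lemma mem_In (T : eqType) (x : T) s : x \in s -> List.In x s.
Proof. elim: s => //= y s IH; rewrite inE => /orP[/eqP->|/IH H]; [by left | by right]. Qed.

Lemma In_nth T (d : T) s x : List.In x s -> exists2 i, i < size s & nth d s i = x.
Proof.
elim: s => //= y s IH [<-|/IH[i Hi <-]]; first by exists 0.
by exists i.+1.
Qed.

Lemma nth_In T (d : T) s i : i < size s -> List.In (nth d s i) s.
Proof. elim: s i => //= y s IH [|i] /= Hi; [by left | right; exact: IH]. Qed.

Section PropEval.
Variables (PV : Type) (p0 : PV).
Implicit Types a b : form PV.

(** Constants and finite conjunctions/disjunctions; [p0] only serves to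
    build a closed tautology [top]. *)
Definition top : form PV := Imp (Var p0) (Var p0).
Definition bot : form PV := Not top.
Arguments top : simpl never.
Arguments bot : simpl never.
Definition bigAnd (l : seq (form PV)) := foldr And top l.
Definition bigOr (l : seq (form PV)) := foldr Or bot l.

Lemma pe_imp v a b : peval v (Imp a b) = (peval v a ==> peval v b).
Proof. by rewrite /=; case: (peval v a); case: (peval v b). Qed.
Lemma pe_or v a b : peval v (Or a b) = (peval v a || peval v b).
Proof. by rewrite /=; case: (peval v a); case: (peval v b). Qed.
Lemma pe_iff v a b : peval v (Iff a b) = (peval v a == peval v b).
Proof. by rewrite /=; case: (peval v a); case: (peval v b). Qed.
Lemma pe_top v : peval v top. Proof. by rewrite pe_imp implybb. Qed.
Lemma pe_bot v : peval v bot = false. Proof. by rewrite /bot /top /=; case: (v _). Qed.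
Lemma pe_bigAnd v l : peval v (bigAnd l) = all (peval v) l.
Proof. by elim: l => [|x l IH]; [exact: pe_top | rewrite /= IH]. Qed.
Lemma pe_bigOr v l : peval v (bigOr l) = has (peval v) l.
Proof. by elim: l => [|x l IH]; [exact: pe_bot | rewrite /= -IH -pe_or]. Qed.

Definition pe := (pe_imp, pe_or, pe_iff, pe_top, pe_bot, pe_bigAnd, pe_bigOr).
End PropEval.

(** [ptaut] decides a goal [forall v, ... peval v _ ...] by rewriting the
    derived connectives and splitting on every propositional atom. *)
Ltac case_atoms := repeat match goal with
  | |- context [?f ?x] => lazymatch type of f with (form _ -> bool) => case: (f x) end
  | |- context [all ?p ?l] => case: (all p l)
  | |- context [has ?p ?l] => case: (has p l) end.

Ltac ptaut := let v := fresh "v" in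
  move=> v; rewrite ?pe /=; rewrite ?pe_bigAnd ?pe_bigOr; case_atoms; cbn; intros;
  unfold is_true in *; congruence.

(** [glc_from] closes GLC under propositional consequence and [glc_conj]
    bundles several theorems into one premise, so every propositional step
    below is a single [glc_from (glc_conj ...); ptaut]. *)

Section PropGLC.
Variables (PV : Type) (p0 : PV).
Implicit Types a b c : form PV.
Notation top := (top p0).
Notation bigAnd := (bigAnd p0).
Notation bigOr := (bigOr p0).

Lemma glc_conj a b : GLC a -> GLC b -> GLC (And a b).
Proof. by move=> Ha Hb; apply: rule_MP Hb; apply: rule_MP Ha; apply: ax_taut; ptaut. Qed.

Lemma glc_from h b : GLC h -> (forall v, peval v h -> peval v b) -> GLC b.
Proof.
by move=> Hh Hv; apply: rule_MP Hh; apply: ax_taut => v; rewrite pe_imp; apply/implyP/Hv.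
Qed.

Lemma glc_bigAnd l : (forall c, List.In c l -> GLC c) -> GLC (bigAnd l).
Proof.
elim: l => [|c l IH] H /=; first by apply: ax_taut; ptaut.
by apply: glc_conj; [apply: H; left | apply: IH => d Hd; apply: H; right].
Qed.

Lemma imp_refl a : GLC (Imp a a).
Proof. by apply: ax_taut; ptaut. Qed.

Lemma imp_bigAnd a l : (forall c, List.In c l -> GLC (Imp a c)) -> GLC (Imp a (bigAnd l)).
Proof.
move=> H; have Hl : GLC (bigAnd (map (Imp a) l)).
  by apply: glc_bigAnd => h Hh; have [c Hc ->] := In_map_inv Hh; apply: H.
apply: (glc_from Hl) => v; rewrite !pe => Hv; apply/implyP => pa.
apply: In_all => c Hc; have := all_In Hv (In_map (Imp a) Hc).
by rewrite pe_imp pa.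
Qed.

Lemma glc_top : GLC top. Proof. by apply: ax_taut; ptaut. Qed.

Lemma bigOr_and a (A : Type) (f : A -> form PV) l :
  GLC (Imp (And a (bigOr (map f l))) (bigOr (map (fun x => And a (f x)) l))).
Proof.
elim: l => [|x l IH] /=; first by apply: ax_taut; ptaut.
by apply: (glc_from IH); ptaut.
Qed.

Lemma refine_cover (A B : Type) (g : A -> form PV) (f : B -> form PV) (P : B -> Prop) xs :
  (forall x, List.In x xs -> GLC (Not (g x)) \/ exists2 y, P y & GLC (Imp (g x) (f y))) ->
  exists L, (forall y, List.In y L -> P y) /\ GLC (Imp (bigOr (map g xs)) (bigOr (map f L))).
Proof.
elim: xs => [|x xs IH] H; first by exists [::]; split => //; apply: imp_refl.
have [L [HL1 HL2]] := IH (fun x' Hx' => H x' (or_intror Hx')).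
case: (H x (or_introl erefl)) => [Hn|[y Py Hy]].
  by exists L; split => //=; apply: (glc_from (glc_conj Hn HL2)); ptaut.
exists (y :: L); split; first by move=> z /= [<-|/HL1].
by apply: (glc_from (glc_conj Hy HL2)); ptaut.
Qed.

Lemma box_mono a b : GLC (Imp a b) -> GLC (Imp (Box a) (Box b)).
Proof. by move=> H; apply: rule_MP (ax_K a b) (rule_Nec_box H). Qed.

Lemma box_and a b : GLC (Imp (And (Box a) (Box b)) (Box (And a b))).
Proof.
have H : GLC (Imp (Box a) (Box (Imp b (And a b)))) by apply: box_mono; apply: ax_taut; ptaut.
by apply: (glc_from (glc_conj H (ax_K b (And a b)))); ptaut.
Qed.

Lemma box_bigAnd l : GLC (Imp (bigAnd (map Box l)) (Box (bigAnd l))).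
Proof.
elim: l => [|c l IH] /=; first by apply: (glc_from (rule_Nec_box glc_top)); ptaut.
by apply: (glc_from (glc_conj IH (box_and c (bigAnd l)))); ptaut.
Qed.

Lemma box_dia a c :
  GLC (Imp (And (Box a) (Not (Box (Not c)))) (Not (Box (Not (And c a))))).
Proof.
have H : GLC (Imp (Box a) (Box (Imp (Not (And c a)) (Not c)))).
  by apply: box_mono; apply: ax_taut; ptaut.
by apply: (glc_from (glc_conj H (ax_K (Not (And c a)) (Not c)))); ptaut.
Qed.

(** Löb's axiom read contrapositively: [◇¬A → ◇(□A ∧ ¬A)], i.e. a
    refutable box is refuted at a point where it is no longer refuted above. *)
Lemma lob_dia a : GLC (Imp (Not (Box a)) (Not (Box (Not (And (Box a) (Not a)))))).
Proof. by apply: (glc_from (ax_L a)); ptaut. Qed.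

Lemma next_not a : GLC (Imp (Next (Not a)) (Not (Next a))).
Proof. by apply: (glc_from (ax_Next_not a)); ptaut. Qed.

Lemma not_next a : GLC (Imp (Not (Next a)) (Next (Not a))).
Proof. by apply: (glc_from (ax_Next_not a)); ptaut. Qed.

Lemma and_next a b : GLC (Imp (And (Next a) (Next b)) (Next (And a b))).
Proof. by apply: (glc_from (ax_Next_and a b)); ptaut. Qed.

(** [○] is a normal operator, so it is monotone and commutes with finite
    disjunctions. *)
Lemma next_mono a b : GLC (Imp a b) -> GLC (Imp (Next a) (Next b)).
Proof.
move=> H; have Ha := rule_Nec_next H.
apply: (glc_from (glc_conj Ha (glc_conj (next_not (And a (Not b)))
           (glc_conj (and_next a (Not b)) (not_next b))))); ptaut.
Qed.

Lemma next_bigOr l : GLC (Imp (Next (bigOr l)) (bigOr (map Next l))).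
Proof.
elim: l => [|c l IH] /=.
  by apply: (glc_from (glc_conj (next_not top) (rule_Nec_next glc_top))); ptaut.
apply: (glc_from (glc_conj IH (glc_conj (next_not (And (Not c) (Not (bigOr l))))
   (glc_conj (and_next (Not c) (Not (bigOr l))) (glc_conj (not_next c) (not_next (bigOr l))))))).
ptaut.
Qed.

Lemma C_rule a b : GLC (Imp a b) -> GLC (Imp a (Box b)) -> GLC (Imp (Next a) (Box (Next b))).
Proof.
move=> H1 H2; have G1 := next_mono H1; have G2 := next_mono H2.
by apply: (glc_from (glc_conj G1 (glc_conj G2 (ax_C b)))); ptaut.
Qed.

Definition consistent a := ~ GLC (Not a).

Lemma cons_weak a b : GLC (Imp a b) -> consistent a -> consistent b.
Proof. by move=> H Ca Nb; apply: Ca; apply: (glc_from (glc_conj H Nb)); ptaut. Qed.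

Lemma cons_or a l : consistent a -> GLC (Imp a (bigOr l)) ->
  exists2 b, List.In b l & consistent (And a b).
Proof.
move=> Ca H; apply: NNPP => Hn; apply: Ca.
have Hl : GLC (bigAnd (map (fun b => Not (And a b)) l)).
  apply: glc_bigAnd => c Hc; have [b Hb ->] := In_map_inv Hc.
  by apply: NNPP => Hb'; apply: Hn; exists b.
apply: (glc_from (glc_conj H Hl)) => v Hv.
have /andP[] : peval v (Imp a (bigOr l)) && peval v (bigAnd (map (fun b => Not (And a b)) l)) := Hv.
rewrite pe_imp pe_bigOr pe_bigAnd => /implyP Ha Hall.
apply/negP => pa; have [b Hb pb] := has_In (Ha pa).
have /negP := all_In Hall (In_map (fun b => Not (And a b)) Hb).
by apply; apply/andP; split; [exact: pa | exact: pb].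
Qed.

Lemma cons_dia a b : consistent a -> GLC (Imp a (Not (Box (Not b)))) -> consistent b.
Proof. by move=> Ca H Nb; apply: Ca; apply: (glc_from (glc_conj H (rule_Nec_box Nb))); ptaut. Qed.

Lemma cons_next a : consistent (Next a) -> consistent a.
Proof.
move=> Ca Na; apply: Ca.
by apply: (glc_from (glc_conj (next_not a) (rule_Nec_next Na))); ptaut.
Qed.
End PropGLC.

(** * Soundness *)

Definition decb (P : Prop) : bool := if excluded_middle_informative P then true else false.

Lemma decbP (P : Prop) : decb P <-> P.
Proof. by rewrite /decb; case: excluded_middle_informative. Qed.

(** On a finite GL frame ⊏ is conversely well-founded: induction upwards
    along ⊏, measured by the number of ⊏-successors, which strictly drops. *)
Lemma converse_wf_ind (F : finDynFrame) : is_dynGL F ->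
  forall P : dW F -> Prop, (forall x, (forall y, dR x y -> P y) -> P x) -> forall x, P x.
Proof.
move=> [Htr Hirr] P H.
pose succ (x : dW F) := [set y | decb (dR x y)].
suff: forall n x, #|succ x| <= n -> P x by move=> S x; apply: (S _ x (leqnn _)).
elim=> [|n IH] x Hx; apply: H => y Hxy.
  have : y \in succ x by rewrite inE; apply/decbP.
  by move: Hx; rewrite leqn0 => /eqP/cards0_eq ->; rewrite inE.
apply: IH; rewrite -ltnS; apply: leq_trans Hx; apply: proper_card.
rewrite properE; apply/andP; split.
  by apply/subsetP => z; rewrite !inE => /decbP Hyz; apply/decbP; apply: Htr Hxy Hyz.
apply/subsetPn; exists y; rewrite !inE; first by apply/decbP.
by apply/negP => /decbP /Hirr.
Qed.

Section Soundness.
Variable PV : Type.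
Implicit Types a b : form PV.

Lemma sat_imp F V w a b : @sat PV F V w (Imp a b) <-> (sat V w a -> sat V w b).
Proof. by rewrite /=; split => H; [move=> Ha; apply: NNPP => Hb; apply: H | case=> /H]. Qed.

(** Tautologies are valid: truth at a point is a propositional valuation. *)
Lemma peval_sat F V w a : peval (fun c => decb (@sat PV F V w c)) a <-> sat V w a.
Proof.
elim: a => [p|a IHa b IHb|a IHa|a IHa|a IHa] /=; try exact: decbP.
  by split => [/andP[/IHa ? /IHb ?]//|[/IHa -> /IHb ->]].
by split => [/negP H /IHa|H]; [|apply/negP => /IHa].
Qed.

Lemma sat_lob F V w a : is_dynGL F -> @sat PV F V w (Imp (Box (Imp (Box a) a)) (Box a)).
Proof.
move=> HF; have [Htr _] := HF; apply/sat_imp => H1.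
suff S : forall y, dR w y -> sat V y a by [].
apply: (converse_wf_ind HF (P := fun y => dR w y -> sat V y a)) => y IH Hy.
apply: (proj1 (sat_imp V y (Box a) a) (H1 y Hy)).
by move=> z Hz; apply: IH z Hz (Htr _ _ _ Hy Hz).
Qed.

Theorem soundness a : GLC a -> forall F, is_dynGL F -> valid_on F a.
Proof.
move=> H F HF; have [Htr _] := HF.
elim: H => {a} [a Ht|a b|a|a|a|a b|a|a b _ IH1 _ IH2|a _ IH|a _ IH] V w.
- by apply/peval_sat; apply: Ht.
- apply/sat_imp => H1; apply/sat_imp => H2 u Hu.
  by move/(_ u Hu)/sat_imp: H1; apply; apply: H2.
- by apply/sat_imp => H1 u Hu z Hz; apply: H1; apply: Htr Hu Hz.
- exact: sat_lob.
- by rewrite /=; tauto.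
- by rewrite /=; tauto.
- apply/sat_imp => -[H1 H2] u Hu /=.
  by case: (df_weak_mono Hu) => [<-//|]; apply: H2.
- by move/sat_imp: (IH1 V w); apply.
- by move=> u _; apply: IH.
- exact: IH.
Qed.
End Soundness.

Fixpoint sub {PV} (a : form PV) : seq (form PV) :=
  a :: match a with
       | And b c => sub b ++ sub c
       | Not b | Box b | Next b => sub b
       | Var _ => [::] end.

(** The nesting depth of [○]: truth of [a] at a point only depends on the
    first [next_depth a] iterates of the dynamic map. *)
Fixpoint next_depth {PV} (a : form PV) : nat :=
  match a with
  | Var _ => 0
  | And b c => maxn (next_depth b) (next_depth c)
  | Not b | Box b => next_depth b
  | Next b => (next_depth b).+1 end.

Lemma sub_self PV (a : form PV) : List.In a (sub a).
Proof. by case: a => *; left. Qed.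

Lemma sub_trans PV (a b c : form PV) :
  List.In b (sub a) -> List.In c (sub b) -> List.In c (sub a).
Proof.
elim: a => [p|a1 IH1 a2 IH2|a1 IH1|a1 IH1|a1 IH1] /= [<-//|H] Hc; right.
- by case: H.
- by apply/In_cat; case/In_cat: H => H; [left; apply: IH1 | right; apply: IH2].
- exact: IH1.
- exact: IH1.
- exact: IH1.
Qed.

(** * Completeness *)
Section Completeness.
Variables (PV : Type) (p0 : PV) (phi : form PV).
Implicit Types a b : form PV.
Notation top := (top p0).
Notation bigOr := (bigOr p0).
Notation bigAnd := (bigAnd p0).

Definition clo := sub phi.
Definition m := size clo.
Definition sf (i : 'I_m) : form PV := nth top clo i.
Definition in_clo a := exists i : 'I_m, sf i = a.

Lemma in_clo_sub i a b : sf i = a -> List.In b (sub a) -> in_clo b.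
Proof.
move=> Ei Hb; have Hin : List.In b clo.
  by apply: (sub_trans (nth_In top (ltn_ord i))); rewrite -/(sf i) Ei.
by have [j Hj Ej] := In_nth top Hin; exists (Ordinal Hj).
Qed.

Lemma in_clo_and i a b : sf i = And a b -> in_clo a /\ in_clo b.
Proof.
by move=> Ei; split; apply: (in_clo_sub Ei); right; apply/In_cat; [left|right]; apply: sub_self.
Qed.

Lemma in_clo_arg i a b : sf i = a -> (a = Not b \/ a = Box b \/ a = Next b) -> in_clo b.
Proof.
by move=> Ei Ha; apply: (in_clo_sub Ei); case: Ha => [|[|]] -> /=; right; apply: sub_self.
Qed.

Definition typ := (m.-tuple bool)%type.
Definition all_typs : seq typ := enum {: typ}.

Definition lit (t : typ) (i : 'I_m) := if tnth t i then sf i else Not (sf i).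

Definition typF (t : typ) := bigAnd (map (lit t) (enum 'I_m)).

Lemma typF_lit t i : GLC (Imp (typF t) (lit t i)).
Proof.
apply: ax_taut => v; rewrite pe_imp pe_bigAnd; apply/implyP => H; apply: (all_In H).
by apply: In_map; apply: mem_In; rewrite mem_enum.
Qed.

Lemma typF_cover : GLC (bigOr (map typF all_typs)).
Proof.
apply: ax_taut => v; rewrite pe_bigOr.
pose t : typ := [tuple peval v (sf i) | i < m].
apply: (@In_has _ _ _ (typF t)); first by apply: In_map; apply: mem_In; rewrite mem_enum.
rewrite pe_bigAnd; apply: In_all => f Hf; have [i _ ->] := In_map_inv Hf.
by rewrite /lit tnth_mktuple; case E: (peval v (sf i)) => //=; rewrite E.
Qed.

Lemma cons_typ_true G t j :
  consistent G -> GLC (Imp G (typF t)) -> GLC (Imp G (sf j)) -> tnth t j.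
Proof.
move=> C H1 H2; case E: (tnth t j) => //; exfalso; apply: C.
have := typF_lit t j; rewrite /lit E => H3.
by apply: (glc_from (glc_conj H1 (glc_conj H2 H3))); ptaut.
Qed.

Lemma cons_typ_false G t j :
  consistent G -> GLC (Imp G (typF t)) -> GLC (Imp G (Not (sf j))) -> tnth t j = false.
Proof.
move=> C H1 H2; case E: (tnth t j) => //; exfalso; apply: C.
have := typF_lit t j; rewrite /lit E => H3.
by apply: (glc_from (glc_conj H1 (glc_conj H2 H3))); ptaut.
Qed.

Definition typ_cons t := consistent (typF t).

Lemma cons_typ t j : typ_cons t -> (tnth t j <-> GLC (Imp (typF t) (sf j))).
Proof.
move=> C; split => [Tj|]; last exact: cons_typ_true C (imp_refl _).
by have := typF_lit t j; rewrite /lit Tj.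
Qed.

Lemma typ_eq t i j : typ_cons t -> sf i = sf j -> tnth t i = tnth t j.
Proof.
move=> C E; case Ej: (tnth t j); first by apply/(cons_typ _ C); rewrite E; apply/(cons_typ _ C).
apply: (cons_typ_false C (imp_refl _)); rewrite E.
by have := typF_lit t j; rewrite /lit Ej.
Qed.

Lemma typ_not t i j : typ_cons t -> sf i = Not (sf j) -> tnth t i = ~~ tnth t j.
Proof.
move=> C E; case Ej: (tnth t j) => /=.
  apply: (cons_typ_false C (imp_refl _)); rewrite E.
  by have := typF_lit t j; rewrite /lit Ej => H; apply: (glc_from H); ptaut.
by apply/(cons_typ _ C); rewrite E; have := typF_lit t j; rewrite /lit Ej.
Qed.

Lemma typ_and t i j k : typ_cons t -> sf i = And (sf j) (sf k) ->
  tnth t i = tnth t j && tnth t k.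
Proof.
move=> C E; have Lj := typF_lit t j; have Lk := typF_lit t k; rewrite /lit in Lj Lk.
case Ej: (tnth t j) Lj; case Ek: (tnth t k) Lk => /= Lk Lj.
- by apply/(cons_typ _ C); rewrite E; apply: (glc_from (glc_conj Lj Lk)); ptaut.
- by apply: (cons_typ_false C (imp_refl _)); rewrite E; apply: (glc_from Lk); ptaut.
- by apply: (cons_typ_false C (imp_refl _)); rewrite E; apply: (glc_from Lj); ptaut.
- by apply: (cons_typ_false C (imp_refl _)); rewrite E; apply: (glc_from Lj); ptaut.
Qed.

Lemma typ_next t u j j1 Z : sf j = Next (sf j1) ->
  consistent (And (typF t) (Next (And (typF u) Z))) -> tnth t j = tnth u j1.
Proof.
move=> E C.
have A1 : GLC (Imp (And (typF t) (Next (And (typF u) Z))) (typF t)) by apply: ax_taut; ptaut.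
have A2 : GLC (Imp (And (typF t) (Next (And (typF u) Z))) (Next (lit u j1))).
  have H0 : GLC (Imp (Next (And (typF u) Z)) (Next (typF u))).
    by apply: next_mono; apply: ax_taut; ptaut.
  by apply: (glc_from (glc_conj (next_mono (typF_lit u j1)) H0)); ptaut.
rewrite /lit in A2; case: (tnth u j1) A2 => A2.
  by apply: (cons_typ_true C A1); rewrite E.
apply: (cons_typ_false C A1); rewrite E.
by apply: (glc_from (glc_conj A2 (next_not (sf j1)))); ptaut.
Qed.

(** [content t] collects [b ∧ □b] for every [□b] of the closure that [t]
    makes true: it is what every ⊏-successor must satisfy (by axiom 4). *)
Definition content_i (t : typ) (i : 'I_m) : form PV :=
  if tnth t i then (if sf i is Box a then And a (Box a) else top) else top.
Definition content (t : typ) := bigAnd (map (content_i t) (enum 'I_m)).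

Lemma content_content_i t i : GLC (Imp (content t) (content_i t i)).
Proof.
apply: ax_taut => v; rewrite pe_imp pe_bigAnd; apply/implyP => H; apply: (all_In H).
by apply: In_map; apply: mem_In; rewrite mem_enum.
Qed.

Lemma typF_box_content t : GLC (Imp (typF t) (Box (content t))).
Proof.
have H : GLC (Imp (typF t) (bigAnd (map Box (map (content_i t) (enum 'I_m))))).
  apply: imp_bigAnd => c Hc; have [c' Hc' ->] := In_map_inv Hc.
  have [i _ ->] := In_map_inv Hc'; rewrite /content_i.
  have := typF_lit t i; rewrite /lit; case: (tnth t i) => Hl; last first.
    by apply: (glc_from (rule_Nec_box (glc_top p0))); ptaut.
  case E: (sf i) Hl => [p|a b|a|a|a] Hl;
    try by apply: (glc_from (rule_Nec_box (glc_top p0))); ptaut.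
  by apply: (glc_from (glc_conj Hl (glc_conj (ax_4 a) (box_and a (Box a))))); ptaut.
by apply: (glc_from (glc_conj H (box_bigAnd p0 (map (content_i t) (enum 'I_m))))); ptaut.
Qed.

Definition prec (t u : typ) := forall i a, sf i = Box a -> tnth t i ->
  tnth u i /\ (forall j, sf j = a -> tnth u j).

Lemma prec_trans t u w : prec t u -> prec u w -> prec t w.
Proof. by move=> H1 H2 i a E Ti; have [Ui _] := H1 i a E Ti; apply: H2 i a E Ui. Qed.

Lemma cons_prec G t u : consistent G ->
  GLC (Imp G (content t)) -> GLC (Imp G (typF u)) -> prec t u.
Proof.
move=> C H1 H2 i a E Ti; have Hc := content_content_i t i; rewrite /content_i Ti E in Hc.
split => [|j Ej]; apply: (cons_typ_true C H2).
  by rewrite E; apply: (glc_from (glc_conj H1 Hc)); ptaut.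
by rewrite Ej; apply: (glc_from (glc_conj H1 Hc)); ptaut.
Qed.

(** The boxes of the closure true in [t], and the number [gap t] of boxes
    still false in [t]; along [prec] the former grows, so the latter drops. *)
Definition isBox a := if a is Box _ then true else false.
Definition boxes_all := [set i : 'I_m | isBox (sf i)].
Definition boxes (t : typ) := [set i : 'I_m | isBox (sf i) && tnth t i].
Definition gap (t : typ) := #|boxes_all| - #|boxes t|.

Lemma boxes_sub t : boxes t \subset boxes_all.
Proof. by apply/subsetP => i; rewrite !inE => /andP[]. Qed.

Lemma prec_boxes t u : prec t u -> boxes t \subset boxes u.
Proof.
move=> H; apply/subsetP => i; rewrite !inE => /andP[Bi Ti]; rewrite Bi /=.
by move: Bi; case E: (sf i) => [p|a b|a|a|a] //= _; case: (H i a E Ti).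
Qed.

Lemma prec_boxes_eq t u : prec t u -> ~~ (boxes t \proper boxes u) -> boxes t = boxes u.
Proof. by move=> /prec_boxes S P; apply/eqP; rewrite eqEproper S. Qed.

Lemma gap_le t : gap t <= m.
Proof.
rewrite /gap; apply: leq_trans (leq_subr _ _) _.
by apply: leq_trans (max_card _) _; rewrite card_ord.
Qed.

Lemma gap_lt t u : boxes t \proper boxes u -> gap u < gap t.
Proof.
move=> P; have := proper_card P; have := subset_leq_card (boxes_sub u).
by rewrite /gap; lia.
Qed.

Lemma gap_pos t i a : sf i = Box a -> tnth t i = false -> 0 < gap t.
Proof.
move=> Ei Ti; have P : boxes t \proper boxes_all.
  by apply/properP; split; [exact: boxes_sub | exists i; rewrite !inE Ei //= Ti].
by have := proper_card P; rewrite /gap; lia.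
Qed.

(** ** Chains

    A point of the countermodel is a chain [(t0,k0) :: (t1,k1) :: ...]: a
    point of type [t0] whose image under the dynamic map has type [t1], and
    so on.  The budget [ki] bounds how often ⊏ may be followed without
    enlarging [boxes ti]; this keeps the model finite. *)
Definition entry := (typ * nat)%type.

Fixpoint chainF (x : seq entry) : form PV :=
  if x is (t, _) :: v then And (typF t) (Next (chainF v)) else top.

(** ⊏ on chains: [prec] on the heads with either more boxes or the same
    boxes and a smaller budget, and the tails equal or again related (this
    is exactly weak monotonicity of [behead]). *)
Fixpoint chainR (x y : seq entry) : Prop :=
  match x, y with
  | (t, k) :: v, (u, k') :: w =>
      [/\ prec t u, boxes t \proper boxes u \/ (boxes t = boxes u /\ k' < k)
        & v = w \/ chainR v w]
  | _, _ => False
  end.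

Lemma chainR_trans x y z : chainR x y -> chainR y z -> chainR x z.
Proof.
elim: x y z => [|[t k] v IH] [|[u k1] v1] [|[w k2] v2] //= [P1 O1 E1] [P2 O2 E2].
split; first exact: prec_trans P1 P2.
- case: O1 => [O1|[O1 L1]]; case: O2 => [O2|[O2 L2]].
  + by left; apply: proper_trans O1 O2.
  + by left; rewrite -O2.
  + by left; rewrite O1.
  + by right; split; [rewrite O1 | apply: ltn_trans L2 L1].
- case: E1 => [E1|R1]; case: E2 => [E2|R2].
  + by left; rewrite E1 E2.
  + by right; rewrite E1.
  + by right; rewrite -E2.
  + by right; apply: IH R1 R2.
Qed.

Lemma chainR_irr x : ~ chainR x x.
Proof.
elim: x => [|[t k] v IH] //= [_ [P|[_ L]] _]; first by rewrite properxx in P.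
by rewrite ltnn in L.
Qed.

Lemma chainR_size x y : chainR x y -> size x = size y.
Proof.
elim: x y => [|[t k] v IH] [|[u k1] w] //= [_ _ [->|R]] //.
by rewrite (IH _ R).
Qed.

Definition budget (x : seq entry) := if x is (_, k) :: _ then k else 0.

Definition budget_ok (t : typ) (k : nat) (v : seq entry) :=
  v <> [::] -> k + gap t <= budget v.

Fixpoint budgets_ok (x : seq entry) : Prop :=
  if x is (t, k) :: v then budget_ok t k v /\ budgets_ok v else True.

(** Chains of length at most [depth] with budgets at most [max_budget]
    suffice; there are finitely many of them. *)
Definition depth := (next_depth phi).+1.
Definition max_budget := depth * m.
Definition bounded (x : seq entry) :=
  (size x <= depth) && all (fun e => e.2 <= max_budget) x.

Definition wf (x : seq entry) := consistent (chainF x) /\ budgets_ok x.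
Definition good (x : seq entry) := wf x /\ bounded x.

Lemma cons_chain_tail e v : consistent (chainF (e :: v)) -> consistent (chainF v).
Proof. by case: e => t k C; apply: cons_next; apply: cons_weak C; apply: ax_taut; ptaut. Qed.

Lemma cons_chain_head t k v : consistent (chainF ((t, k) :: v)) -> typ_cons t.
Proof. by apply: cons_weak; apply: ax_taut; ptaut. Qed.

Lemma wf_tail e v : wf (e :: v) -> wf v.
Proof. by case: e => t k [/cons_chain_tail C [_ B]]. Qed.

Lemma good_tail e v : good (e :: v) -> good v.
Proof.
case=> /wf_tail W /andP[/= S /andP[_ A]]; split => //.
by rewrite /bounded A andbT; lia.
Qed.

Lemma tail_budget_pos t k v : budget_ok t k v -> 0 < k + gap t -> v = [::] \/ 0 < budget v.
Proof. by case: v => [|e v] B P; [left | right; have : e :: v <> [::] by []; move=> /B; lia]. Qed.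

Definition good_succ (x y : seq entry) :=
  [/\ good y, chainR x y & budget x <= (budget y).+1].

Definition step_budget (t u : typ) (k : nat) :=
  if boxes t \proper boxes u then k else k.-1.

Lemma step_budget_cases t u k : prec t u -> (boxes t \proper boxes u \/ 0 < k) ->
  (boxes t \proper boxes u /\ gap u < gap t /\ step_budget t u k = k) \/
  [/\ boxes t = boxes u, gap u = gap t, step_budget t u k = k.-1 & 0 < k].
Proof.
rewrite /step_budget => Pr Hpk; case: ifP => P.
  by left; split => //; split => //; apply: gap_lt.
have E := prec_boxes_eq Pr (negbT P); right; split => //; first by rewrite /gap E.
by case: Hpk => [|//]; rewrite P.
Qed.

Lemma step_succ t k v u w : good ((t, k) :: v) -> prec t u ->
  (boxes t \proper boxes u \/ 0 < k) -> (w = v \/ good_succ v w) ->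
  consistent (And (typF u) (Next (chainF w))) ->
  good_succ ((t, k) :: v) ((u, step_budget t u k) :: w).
Proof.
move=> Gx Pr Hpk Hw Cy; have [[_ [Bx _]] /andP[/= Sx /andP[Kx _]]] := Gx.
have Gw : good w by case: Hw => [->|[]]; [apply: good_tail Gx|].
have Sw : size w = size v by case: Hw => [->|[_ /chainR_size ->]].
have Hvw : budget v <= (budget w).+1 by case: Hw => [->|[]] //; lia.
have Hstep := step_budget_cases Pr Hpk.
split; [split; [split|] | split |].
- exact: Cy.
- split; last by case: Gw => [[]].
  move=> wn; have vn : v <> [::] by move=> E; apply: wn; apply/size0nil; rewrite Sw E.
  by have := Bx vn; case: Hstep => [[_ [? ->]]|[_ ? -> ?]]; lia.
- rewrite /bounded /= Sw Sx; case: Gw => _ /andP[_ ->]; rewrite andbT.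
  by case: Hstep => [[_ [_ ->]]|[_ _ -> _]]; lia.
- exact: Pr.
- by case: Hstep => [[? _]|[? _ -> ?]]; [left | right; split => //; lia].
- by case: Hw => [->|[_ R _]]; [left | right].
- by case: Hstep => [[_ [_ ->]]|[_ _ -> _]] /=; lia.
Qed.

Definition extensions (c : nat) (ws : seq (seq entry)) :=
  [seq (u, c) :: w | u <- all_typs, w <- ws].

Lemma next_cover c ws :
  GLC (Imp (Next (bigOr (map chainF ws))) (bigOr (map chainF (extensions c ws)))).
Proof.
apply: (glc_from (glc_conj (next_bigOr p0 (map chainF ws)) typF_cover)) => e He.
have /andP[] : peval e (Imp (Next (bigOr (map chainF ws))) (bigOr (map Next (map chainF ws))))
    && peval e (bigOr (map typF all_typs)) := He.
rewrite pe_imp !pe_bigOr => /implyP H /has_In[a Ha pa].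
rewrite pe_imp pe_bigOr; apply/implyP => /H /has_In[b Hb pb].
have [u Hu Eu] := In_map_inv Ha; have [b' Hb' Eb] := In_map_inv Hb.
have [w Hw Eb'] := In_map_inv Hb'; subst a b b'.
apply: (@In_has _ _ _ (chainF ((u, c) :: w))).
  by apply: In_map; apply: (@In_allpairs _ _ _ (fun u w => (u, c) :: w)).
by apply/andP; split; [exact: pa | exact: pb].
Qed.

Definition cand_form (t : typ) (y : seq entry) := And (content t) (chainF y).

Lemma cand_prec t u k w : consistent (cand_form t ((u, k) :: w)) -> prec t u.
Proof. by move=> C; apply: (cons_prec C); apply: ax_taut; ptaut. Qed.

(** Axiom C at work: if every ⊏-successor of [chainF v] is described by
    [v :: L], every ⊏-successor of [(t,k) :: v] is a candidate extending
    [v :: L]. *)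
Lemma box_future t k v L : GLC (Imp (chainF v) (Box (bigOr (map chainF (v :: L))))) ->
  GLC (Imp (chainF ((t, k) :: v)) (Box (bigOr (map (cand_form t) (extensions 0 (v :: L)))))).
Proof.
move=> H; set D := bigOr (map chainF (v :: L)).
have H0 : GLC (Imp (chainF v) D) by apply: ax_taut; ptaut.
have E : GLC (Imp (And (content t) (Next D)) (bigOr (map (cand_form t) (extensions 0 (v :: L))))).
  have B : GLC (Imp (And (content t) (bigOr (map chainF (extensions 0 (v :: L)))))
                    (bigOr (map (cand_form t) (extensions 0 (v :: L))))) := bigOr_and _ _ _ _.
  by apply: (glc_from (glc_conj (next_cover 0 (v :: L)) B)); ptaut.
apply: (glc_from (glc_conj (typF_box_content t) (glc_conj (C_rule H0 H)
          (glc_conj (box_and (content t) (Next D)) (box_mono E))))); ptaut.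
Qed.

Lemma box_cover x : good x -> (x = [::] \/ 0 < budget x) ->
  exists L, (forall y, List.In y L -> good_succ x y) /\
    GLC (Imp (chainF x) (Box (bigOr (map chainF (x :: L))))).
Proof.
elim: x => [|[t k] v IH] Gx Hpos.
  have T : GLC (bigOr (map chainF [:: [::]])) by apply: ax_taut; ptaut.
  by exists [::]; split => //; apply: (glc_from (rule_Nec_box T)); ptaut.
have kpos : 0 < k by case: Hpos.
have [[_ [Bx _]] _] := Gx.
have [Lv [HLv Cv]] := IH (good_tail Gx) (tail_budget_pos Bx (ltn_addr _ kpos)).
have [L [HL DL]] : exists L, (forall y, List.In y L -> good_succ ((t, k) :: v) y) /\
    GLC (Imp (bigOr (map (cand_form t) (extensions 0 (v :: Lv)))) (bigOr (map chainF L))).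
  (* each candidate is refutable or, by [step_succ], a good successor *)
  apply: refine_cover => c Hc; have [u [w [_ Hw ->]]] := In_allpairs_inv Hc.
  case: (classic (consistent (cand_form t ((u, 0) :: w)))) => Cc; last by left; apply: NNPP.
  right; exists ((u, step_budget t u k) :: w); last by apply: ax_taut; ptaut.
  apply: step_succ => //; [exact: cand_prec Cc | by right | |].
    by case: Hw => [<-|/HLv]; [left | right].
  by apply: cons_weak Cc; apply: ax_taut; ptaut.
exists L; split => //.
have E : GLC (Imp (bigOr (map (cand_form t) (extensions 0 (v :: Lv))))
                  (bigOr (map chainF (((t, k) :: v) :: L)))).
  by apply: (glc_from DL); ptaut.
by apply: (glc_from (glc_conj (box_future t k Cv) (box_mono E))); ptaut.
Qed.

(** Löb's axiom yields a candidate
    where moreover [□a] holds, so the successor gains a box and keeps its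
    budget. *)
Lemma box_witness t k v i a : good ((t, k) :: v) -> sf i = Box a -> tnth t i = false ->
  exists u k' w, [/\ good ((u, k') :: w), chainR ((t, k) :: v) ((u, k') :: w)
                   & forall j, sf j = a -> tnth u j = false].
Proof.
move=> Gx Ei Ti; have [[Cx [Bx _]] _] := Gx.
have [Lv [HLv Cv]] := box_cover (good_tail Gx) (tail_budget_pos Bx (ltn_addl _ (gap_pos Ei Ti))).
set A := bigOr (map (cand_form t) (extensions 0 (v :: Lv))).
set C := And (Box a) (Not a).
have CA : consistent (And C A).
  have Li := typF_lit t i; rewrite /lit Ti Ei in Li.
  apply: (cons_dia Cx); apply: (glc_from (glc_conj (box_future t k Cv)
    (glc_conj (lob_dia a) (glc_conj Li (box_dia A C))))); ptaut.
have CAA : GLC (Imp (And C A) A) by apply: ax_taut; ptaut.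
have [b Hb Cb] := cons_or CA CAA.
have [y Hy Eb] := In_map_inv Hb; have [u [w [_ Hw Ey]]] := In_allpairs_inv Hy; subst b y.
set G := And (And C A) _ in Cb.
have GU : GLC (Imp G (typF u)) by apply: ax_taut; ptaut.
have Pr : prec t u by apply: (@cand_prec t u 0 w (cons_weak _ Cb)); apply: ax_taut; ptaut.
have Ui : tnth u i by apply: (cons_typ_true Cb GU); rewrite Ei; apply: ax_taut; ptaut.
have Gain : boxes t \proper boxes u.
  by apply/properP; split; [exact: prec_boxes | exists i; rewrite !inE Ei //= Ti].
have [Gy Ry _] : good_succ ((t, k) :: v) ((u, step_budget t u k) :: w).
  apply: step_succ => //; [by left | by case: Hw => [<-|/HLv]; [left | right] |].
  by apply: cons_weak Cb; apply: ax_taut; ptaut.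
exists u, (step_budget t u k), w; split => // j Ej.
by apply: (cons_typ_false Cb GU); rewrite Ej; apply: ax_taut; ptaut.
Qed.

(** ** The finite countermodel *)
Fixpoint chains_upto (E : seq entry) n : seq (seq entry) :=
  if n is n'.+1 then [::] :: [seq e :: l | e <- E, l <- chains_upto E n'] else [:: [::]].

Definition entries : seq entry := [seq (t, n) | t <- all_typs, n <- iota 0 max_budget.+1].

Lemma mem_entries e : (e \in entries) = (e.2 <= max_budget).
Proof.
apply/allpairsP/idP => [[[t n] [_ Hn ->]]|He]; first by move: Hn; rewrite mem_iota /= add0n ltnS.
exists (e.1, e.2); split; first by rewrite mem_enum.
  by rewrite mem_iota /= add0n ltnS.
by case: e He.
Qed.

Definition points := chains_upto entries depth.

Lemma mem_points x : (x \in points) = bounded x.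
Proof.
rewrite /points /bounded; elim: depth x => [|n IH] [|e l] //=.
rewrite inE /=; apply/allpairsP/idP => [[[e1 l1] [/= H1 H2 [-> ->]]]|].
  by move: H1 H2; rewrite mem_entries IH /= ltnS => -> /andP[-> ->].
rewrite ltnS => /andP[Hs /andP[He Hl]]; exists (e, l); split => //=.
  by rewrite mem_entries.
by rewrite IH Hs.
Qed.

Definition point := seq_sub points.

Lemma behead_in (p : point) : behead (ssval p) \in points.
Proof.
rewrite mem_points; have := ssvalP p; rewrite mem_points.
by case: (ssval p) => [|e l] //; rewrite /bounded /= => /andP[Hs /andP[_ ->]]; rewrite andbT; lia.
Qed.

Lemma nil_in : ([::] : seq entry) \in points.
Proof. by rewrite mem_points. Qed.

Definition canR (p q : point) : Prop := chainR (ssval p) (ssval q) /\ wf (ssval q).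
Definition canf (p : point) : point := SeqSub (behead_in p).

Lemma canf_mono p q : canR p q -> canf p = canf q \/ canR (canf p) (canf q).
Proof.
rewrite /canR /canf; case: p q => [x Hx] [y Hy] /=.
case: x Hx => [|[t k] v] Hx; case: y Hy => [|[u k'] w] Hy; try by case=> [[]].
move=> [[_ _ [E|R]] Wy]; first by left; apply: val_inj; rewrite /= E.
by right; split => //; apply: wf_tail Wy.
Qed.

Definition canon : finDynFrame :=
  {| dW := point; dpt := SeqSub nil_in; dR := canR; df := canf; df_weak_mono := canf_mono |}.

Lemma canon_GL : is_dynGL canon.
Proof.
split => [x y z [R1 _] [R2 W2]|x [R _]]; first by split => //; apply: chainR_trans R1 R2.
exact: chainR_irr R.
Qed.

Definition canV (p : PV) (w : point) : Prop :=
  exists t k v j, [/\ ssval w = (t, k) :: v, sf j = Var p & tnth t j].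

(** ** The truth lemma *)
Definition truth_at a := forall (w : point) t k v j,
  wf (ssval w) -> ssval w = (t, k) :: v -> sf j = a -> next_depth a < size (ssval w) ->
  (@sat PV canon canV w a <-> tnth t j).

Lemma wf_head_cons t k v : wf ((t, k) :: v) -> typ_cons t.
Proof. by case=> /cons_chain_head. Qed.

Lemma truth_var p : truth_at (Var p).
Proof.
move=> w t k v j Ww Ew Ej _ /=; split => [[t' [k' [v' [j' [E' Ej' T']]]]]|Tj].
  move: E'; rewrite Ew => -[Et _ _]; subst t'.
  rewrite (typ_eq (j := j') _ (etrans Ej (esym Ej'))) //.
  by apply: wf_head_cons (k) (v) _; rewrite -Ew.
by exists t, k, v, j.
Qed.

Lemma truth_and a b : truth_at a -> truth_at b -> truth_at (And a b).
Proof.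
move=> IHa IHb w t k v j Ww Ew Ej /= Ho; have [[j1 E1] [j2 E2]] := in_clo_and Ej.
have Ct : typ_cons t by apply: wf_head_cons (k) (v) _; rewrite -Ew.
rewrite (typ_and (j := j1) (k := j2) Ct) ?Ej ?E1 ?E2 //.
rewrite (IHa w t k v j1) ?(IHb w t k v j2) //; last 2 first.
- exact: leq_ltn_trans (leq_maxr _ _) Ho.
- exact: leq_ltn_trans (leq_maxl _ _) Ho.
by split => [[-> ->]|/andP].
Qed.

Lemma truth_not a : truth_at a -> truth_at (Not a).
Proof.
move=> IH w t k v j Ww Ew Ej /= Ho; have [j1 E1] := in_clo_arg Ej (or_introl erefl).
have Ct : typ_cons t by apply: wf_head_cons (k) (v) _; rewrite -Ew.
rewrite (typ_not (j := j1) Ct) ?Ej ?E1 // (IH w t k v j1) //.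
by split => /negP.
Qed.

(** The box case uses [box_witness] for a false box, and [prec] for a true one. *)
Lemma truth_box a : truth_at a -> truth_at (Box a).
Proof.
move=> IH w t k v j Ww Ew Ej /= Ho; have [j1 E1] := in_clo_arg Ej (or_intror (or_introl erefl)).
split => [Hs|Tj y [Ry Wy]].
  case Tj: (tnth t j) => //; exfalso.
  have Gx : good ((t, k) :: v) by rewrite -Ew; split => //; rewrite -mem_points; apply: ssvalP.
  have [u [k' [w' [Gy Ry Fy]]]] := box_witness Gx Ej Tj.
  have Iy : (u, k') :: w' \in points by rewrite mem_points; case: Gy.
  pose y : point := SeqSub Iy.
  have Hy : canR w y by split; [rewrite Ew | case: Gy].
  have Sy : next_depth a < size (ssval y) by rewrite [ssval y]/= -(chainR_size Ry) -Ew.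
  by have := proj1 (IH y u k' w' j1 (proj1 Gy) erefl E1 Sy) (Hs y Hy); rewrite Fy.
have Sy := chainR_size Ry; move: Ry; rewrite Ew.
case Ey: (ssval y) Sy => [|[u k'] w'] //= Sy [Pr _ _].
apply/(IH y u k' w' j1 Wy Ey E1); first by rewrite Ey /= -Sy.
by case: (Pr j a Ej Tj) => _; apply.
Qed.

(** The next case uses the agreement of [○]-subformulas along a consistent chain. *)
Lemma truth_next a : truth_at a -> truth_at (Next a).
Proof.
move=> IH w t k v j Ww Ew Ej; have [j1 E1] := in_clo_arg Ej (or_intror (or_intror erefl)).
rewrite Ew /= ltnS; case: v Ew => [|[t2 k2] v2] Ew Ho; first by rewrite ltn0 in Ho.
have Efw : ssval (canf w) = (t2, k2) :: v2 by rewrite /= Ew.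
have Wfw : wf (ssval (canf w)) by rewrite Efw; apply: (@wf_tail (t, k)); rewrite -Ew.
apply: (iff_trans (IH (canf w) t2 k2 v2 j1 Wfw Efw E1 _)); first by rewrite Efw.
have Ej' : sf j = Next (sf j1) by rewrite Ej E1.
by rewrite (typ_next Ej' (proj1 (_ : wf ((t, k) :: (t2, k2) :: v2)))) // -Ew.
Qed.

Lemma truth_lemma a : truth_at a.
Proof.
elim: a => [p|a IHa b IHb|a IHa|a IHa|a IHa].
- exact: truth_var.
- exact: truth_and.
- exact: truth_not.
- exact: truth_box.
- exact: truth_next.
Qed.

(** Chains of length [n] with budgets [c, c + m, c + 2m, ...]: every point
    is described by one of them, and their budgets leave room for all gaps. *)
Fixpoint root_chains n c : seq (seq entry) :=
  if n is n'.+1 then extensions c (root_chains n' (c + m)) else [:: [::]].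

Lemma root_cover n c : GLC (bigOr (map chainF (root_chains n c))).
Proof.
elim: n c => [|n IH] c /=; first by apply: ax_taut; ptaut.
exact: rule_MP (next_cover c _) (rule_Nec_next (IH (c + m))).
Qed.

Lemma root_chains_spec n c l : List.In l (root_chains n c) ->
  [/\ size l = n, budgets_ok l, (0 < n -> budget l = c) & all (fun e => e.2 <= c + n * m) l].
Proof.
elim: n c l => [|n IH] c l /=; first by case=> // <-.
move=> Hin; have [t [l' [_ Hl' ->]]] := In_allpairs_inv Hin.
have [S1 O1 B1 A1] := IH _ _ Hl'.
split => //=; first by rewrite S1.
- split => // Hne; have n0 : 0 < n by rewrite -S1 lt0n size_eq0; apply/eqP.
  by rewrite B1 //; have := gap_le t; lia.
- apply/andP; split; first by lia.
  by apply/allP => e He; have := allP A1 e He; rewrite mulSn /=; lia.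
Qed.

Lemma refuting_chain : consistent (Not phi) -> exists t k v,
  [/\ good ((t, k) :: v), size ((t, k) :: v) = depth
    & consistent (And (Not phi) (chainF ((t, k) :: v)))].
Proof.
move=> Cn; have H : GLC (Imp (Not phi) (bigOr (map chainF (root_chains depth 0)))).
  by apply: (glc_from (root_cover depth 0)); ptaut.
have [b Hb Cb] := cons_or Cn H; have [l Hl Eb] := In_map_inv Hb; subst b.
have [S O _ A] := root_chains_spec Hl.
have Wl : wf l by split => //; apply: cons_weak Cb; apply: ax_taut; ptaut.
clear Hb; case: l Hl S O A Wl Cb => [|[t k] v] Hl S O A Wl Cb; first by [].
exists t, k, v; split => //; split => //.
by rewrite /bounded S leqnn; rewrite add0n in A.
Qed.

Lemma sf_phi : exists j : 'I_m, sf j = phi.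
Proof.
have m0 : 0 < m by rewrite /m /clo; case: (phi).
by exists (Ordinal m0); rewrite /sf /clo; case: (phi).
Qed.

Theorem completeness : (forall F, is_dynGL F -> valid_on F phi) -> GLC phi.
Proof.
move=> Hv; apply: NNPP => Hn.
have Cn : consistent (Not phi) by move=> H; apply: Hn; apply: (glc_from H); ptaut.
have [t [k [v [[Wx Bx] Sx Cx]]]] := refuting_chain Cn.
have [j0 Ej0] := sf_phi.
have Tj : tnth t j0 = false.
  by apply: (cons_typ_false Cx); [|rewrite Ej0]; apply: ax_taut; ptaut.
have Ix : (t, k) :: v \in points by rewrite mem_points.
have Ho : next_depth phi < size ((t, k) :: v) by rewrite Sx.
have := proj1 (truth_lemma (w := SeqSub Ix) Wx erefl Ej0 Ho) (Hv canon canon_GL canV _).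
by rewrite Tj.
Qed.
End Completeness.

Theorem mainTheorem6 (PV : Type) (p0 : PV) (phi : form PV) :
  GLC phi <-> (forall F : finDynFrame, is_dynGL F -> valid_on F phi).
Proof. by split; [exact: soundness | exact: (@completeness _ p0 phi)]. Qed.
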